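(* Let $b$ be a Baer subline of $\ell_\infty$ in $\mathrm{PG}(2,q^2)$, and let $\bar P,\bar Q\in\ell_\infty$ be distinct points that are conjugate with respect to $b$. Then in $\mathrm{PG}(4,q^2)$ the lines $PQ^q$ and $P^qQ$ are lines of the extended regulus $[b]^\star$.
   Context: Bruck–Bose setting: $q$ a prime power; $\Sigma_\infty$ a hyperplane of $\mathrm{PG}(4,q)$ with a regular spread $\mathcal S$ whose lines $[T]$ correspond to the points $\bar T\in\ell_\infty$ of $\mathrm{PG}(2,q^2)$. In $\mathrm{PG}(4,q^2)$ the transversals of $\mathcal S$ are the two conjugate lines $g,g^q$ (conjugation $X\mapsto X^q$ on coordinates) such that for each $\bar T\in\ell_\infty$, with $T:=[T]^\star\cap g$, the extended spread line is $[T]^\star=TT^q$; this gives a bijection $\bar T\leftrightarrow T$ between $\ell_\infty$ and $g$. A Baer subline $b$ of $\ell_\infty$ corresponds to the regulus $[b]=\{[T]:\bar T\in b\}$ contained in $\mathcal S$; $[b]^\star$ denotes the regulus of $\Sigma_\infty^\star$ consisting of the $q^2+1$ lines of the same ruling of the extended hyperbolic quadric (the quadric covered by $[b]$, extended to $\mathrm{PG}(4,q^2)$) that contains the extensions of the lines of $[b]$. Two points of $\ell_\infty$ are conjugate with respect to $b$ if they are interchanged by the unique involutory (semilinear) collineation of $\ell_\infty$ fixing $b$ pointwise. *)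

From HB Require Import structures.
From mathcomp Require Import all_boot all_order all_algebra all_field.
Set Implicit Arguments. Unset Strict Implicit. Unset Printing Implicit Defensive.
Import GRing.Theory.
Local Open Scope ring_scope.

Definition conjm (L : fieldType) (q : nat) m n (M : 'M[L]_(m, n)) : 'M[L]_(m, n) :=
  map_mx (fun x => x ^+ q) M.

(* Points of l_oo = PG(1,q^2) are nonzero vectors of 'rV_2 (up to scalar,
   compared with (_ == _)%MS).  The Baer subline b(A) is the image of the
   canonical subline PG(1,q) = {[s] : s^q = s} under the projectivity A. *)
Definition in_baer (L : fieldType) (q : nat) (A : 'M[L]_2) (v : 'rV[L]_2) : Prop :=
  v != 0 /\ exists s : 'rV[L]_2, [/\ s != 0, conjm q s = s & (v == s *m A)%MS].

(* P and Q are conjugate w.r.t. b(A): they are interchanged by an involutory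
   semilinear collineation  v |-> v^sigma M  of l_oo fixing b(A) pointwise. *)
Definition b_conjugate (L : fieldType) (q : nat) (A : 'M[L]_2) (P Q : 'rV[L]_2) : Prop :=
  exists (s : {rmorphism L -> L}) (M : 'M[L]_2),
    let f := fun v : 'rV[L]_2 => map_mx s v *m M in
    [/\ M \in unitmx,
        (forall v, v != 0 -> (f (f v) == v)%MS),
        (exists v, v != 0 /\ ~~ (f v == v)%MS),
        (forall v, in_baer q A v -> (f v == v)%MS) &
        ((f P == Q)%MS /\ (f Q == P)%MS)].

(* Sigma_oo^* = PG(3,q^2): nonzero vectors of 'rV_4.  The transversal g is the
   row space of G (and g^q that of conjm q G); the point T of g corresponding
   to bar T = [t] is t *m G, and the extended spread line [T]^* = T T^q. *)
Definition ext_line (L : fieldType) (q : nat) (G : 'M[L]_(2, 4)) (t : 'rV[L]_2)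
  : 'M[L]_(2, 4) := col_mx (t *m G) (conjm q (t *m G)).

(* Points of Sigma_oo = PG(3,q) (rational points) on the lines of [b]:
   the point set of the hyperbolic quadric covered by the regulus [b]. *)
Definition covered_point (L : fieldType) (q : nat) (G : 'M[L]_(2, 4)) (A : 'M[L]_2)
  (X : 'rV[L]_4) : Prop :=
  [/\ X != 0, conjm q X = X & exists t, in_baer q A t /\ (X <= ext_line q G t)%MS].

Definition qform (L : fieldType) (c : 'M[L]_4) (X : 'rV[L]_4) : L :=
  (X *m c *m X^T) 0 0.

(* c (with GF(q)-coefficients) is a quadratic form of PG(3,q) whose
   quadric is exactly the point set covered by [b]. *)
Definition defines_quadric (L : fieldType) (q : nat) (G : 'M[L]_(2, 4)) (A : 'M[L]_2)
  (c : 'M[L]_4) : Prop :=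
  conjm q c = c /\
  forall X : 'rV[L]_4, X != 0 -> conjm q X = X ->
    (qform c X = 0 <-> covered_point q G A X).

(* m is a line of the regulus [b]^*: a line of the extended quadric
   (zero set of c in PG(3,q^2)) belonging to the ruling containing the
   extended lines [T]^*, bar T in b, i.e. equal to or skew to each of them. *)
Definition ext_regulus_line (L : fieldType) (q : nat) (G : 'M[L]_(2, 4)) (A : 'M[L]_2)
  (c : 'M[L]_4) (m : 'M[L]_(2, 4)) : Prop :=
  [/\ \rank m = 2%N,
      (forall X : 'rV[L]_4, (X <= m)%MS -> qform c X = 0) &
      (forall t, in_baer q A t ->
         (m == ext_line q G t)%MS \/ \rank (m :&: ext_line q G t)%MS = 0%N)].

From HB Require Import structures.
From mathcomp Require Import all_boot all_order all_algebra all_solvable all_field.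
From mathcomp Require Import ring zify.
Import GRing.Theory.
Local Open Scope ring_scope.
Set Implicit Arguments. Unset Strict Implicit.

(* The proof has three parts.
   1. The collineation v |-> v^s M interchanging P and Q fixes b pointwise;
      conjugated by A it fixes (1,0), (0,1), (1,1), so M is essentially
      scalar and s fixes GF(q).  Hence s is the identity or the Frobenius
      map, and not the identity since the collineation is nontrivial:
      Q ~ (P A^-1)^q A  (b_conjugate_frob).
   2. In coordinates y A G + z A^q G^q on Sigma_oo^* the quadric has a Gram
      matrix made of three 2x2 block forms.  The points l s A G + l^q (s A G)^q
      (s rational) are covered by [b], so comparing coefficients of l^2,
      l^(q+1), l^(2q) each block form vanishes on PG(1,q), hence everywhere:
      every line u A G, u A^q G^q lies on the extended quadric
      (quadric_contains_conjugate_lines).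
   3. P and Q lie off b, and a line joining y G and z G^q with y, z^q off b is
      skew to each extended spread line [T]^*, T in b, by uniqueness of
      coordinates on g and g^q (regulus_line_off_baer).
   The theorem applies 1-3 to the pairs (P, Q) and (Q, P). *)

Lemma poly_vanish_eq0 (L : finFieldType) (p : {poly L}) :
  (size p <= #|L|)%N -> (forall x, p.[x] = 0) -> p = 0.
Proof.
move=> size_p p_vanish; apply: (@roots_geq_poly_eq0 _ p (enum L)).
- by apply/allP => x _; rewrite /root p_vanish.
- exact: enum_uniq.
- by rewrite -cardE.
Qed.

Lemma monomials3_indep (L : finFieldType) (e1 e2 e3 : nat) (a b c : L) :
  (e1 < #|L|)%N -> (e2 < #|L|)%N -> (e3 < #|L|)%N ->
  e1 != e2 -> e1 != e3 -> e2 != e3 ->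
  (forall x, a * x ^+ e1 + b * x ^+ e2 + c * x ^+ e3 = 0) ->
  [/\ a = 0, b = 0 & c = 0].
Proof.
move=> lt1 lt2 lt3 ne12 ne13 ne23 vanish.
pose p : {poly L} := a *: 'X^e1 + b *: 'X^e2 + c *: 'X^e3.
have size_mono (d : L) e : (e < #|L|)%N -> (size (d *: 'X^e : {poly L}) <= #|L|)%N.
  by move=> lte; apply: leq_trans (size_scale_leq _ _) _; rewrite size_polyXn.
have p0 : p = 0.
  apply: poly_vanish_eq0 => [|x]; last by rewrite /p !hornerE.
  rewrite /p; apply: leq_trans (size_polyD _ _) _; rewrite geq_max size_mono // andbT.
  by apply: leq_trans (size_polyD _ _) _; rewrite geq_max !size_mono.
have coef_p e : p`_e = 0 by rewrite p0 coef0.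
move: (coef_p e1) (coef_p e2) (coef_p e3).
rewrite /p !coefD !coefZ !coefXn !eqxx.
rewrite ![e3 == _]eq_sym [e2 == e1]eq_sym (negbTE ne12) (negbTE ne13) (negbTE ne23).
by rewrite !mulr0 !mulr1 ?addr0 ?add0r.
Qed.

Lemma eqmx_rV (F : fieldType) n (u v : 'rV[F]_n) : (u == v)%MS -> exists a, v = a *: u.
Proof. by case/andP => _ /sub_rVP. Qed.

Lemma eqmxC (F : fieldType) m1 m2 n (U : 'M[F]_(m1, n)) (V : 'M[F]_(m2, n)) :
  (U == V)%MS = (V == U)%MS.
Proof. exact: andbC. Qed.

Lemma sub_col_rVP (F : fieldType) n (X U V : 'rV[F]_n) :
  reflect (exists a b, X = a *: U + b *: V) (X <= col_mx U V)%MS.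
Proof.
apply: (iffP idP) => [/submxP[D ->] | [a [b ->]]].
  rewrite -[D]hsubmxK mul_row_col [lsubmx D]mx11_scalar [rsubmx D]mx11_scalar.
  by rewrite !mul_scalar_mx; do 2 eexists.
by apply/submxP; exists (row_mx a%:M b%:M); rewrite mul_row_col !mul_scalar_mx.
Qed.

Lemma col_mx_coord_inj (F : fieldType) m1 m2 n (G : 'M[F]_(m1, n)) (H : 'M[F]_(m2, n))
    (y1 y2 : 'rV[F]_m1) (z1 z2 : 'rV[F]_m2) :
  row_free (col_mx G H) -> y1 *m G + z1 *m H = y2 *m G + z2 *m H -> y1 = y2 /\ z1 = z2.
Proof. by move=> /row_free_inj inj; rewrite -!mul_row_col => /inj /eq_row_mx. Qed.

Lemma col_mx_swap (F : fieldType) m1 m2 n (U : 'M[F]_(m1, n)) (V : 'M[F]_(m2, n)) :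
  (col_mx U V :=: col_mx V U)%MS.
Proof. by apply: eqmx_trans (eqmx_sym (addsmxE U V)) _; rewrite addsmxC; apply: addsmxE. Qed.

Definition row2 (L : fieldType) (x y : L) : 'rV[L]_2 :=
  \row_(j < 2) (if j == 0 then x else y).

Section Row2.
Variable L : fieldType.
Implicit Types (x y : L) (v : 'rV[L]_2).

Lemma row2_coord v : v = row2 (v 0 0) (v 0 1).
Proof.
apply/matrixP => i j; rewrite !mxE ord1.
by case: j => [[|[|//]] lt_j2] /=; congr (v 0 _); apply: val_inj.
Qed.

Lemma row2_mul x y (N : 'M[L]_2) :
  row2 x y *m N = row2 (x * N 0 0 + y * N 1 0) (x * N 0 1 + y * N 1 1).
Proof.
apply/matrixP => i j; rewrite !mxE !big_ord_recr big_ord0 /= add0r !mxE.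
by case: j => [[|[|//]] lt_j2]; congr (_ * N _ _ + _ * N _ _); apply: val_inj.
Qed.

Lemma row2Z a x y : a *: row2 x y = row2 (a * x) (a * y).
Proof. by apply/matrixP => i j; rewrite !mxE; case: ifP. Qed.

Lemma row2_inj x y x' y' : row2 x y = row2 x' y' -> x = x' /\ y = y'.
Proof.
by move=> e; split; [have := congr1 (fun v => v 0 0) e | have := congr1 (fun v => v 0 1) e];
  rewrite !mxE.
Qed.

Lemma row2_eq0 x y : (row2 x y == 0) = (x == 0) && (y == 0).
Proof.
apply/eqP/andP => [e | [/eqP-> /eqP->]].
  by have [-> ->] := row2_inj (etrans e (row2_coord 0)); rewrite !mxE.
by apply/matrixP => i j; rewrite !mxE; case: ifP.
Qed.

Lemma map_row2 (s : {rmorphism L -> L}) x y :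
  map_mx s (row2 x y) = row2 (s x) (s y).
Proof. by apply/matrixP => i j; rewrite !mxE; case: ifP. Qed.

Lemma fix3_scalar (N : 'M[L]_2) :
  (row2 1 0 *m N == row2 1 0)%MS -> (row2 0 1 *m N == row2 0 1)%MS ->
  (row2 1 1 *m N == row2 1 1)%MS ->
  exists2 n, n != 0 & forall v, v *m N = n *: v.
Proof.
move=> /eqmx_rV[a1] + /eqmx_rV[a2] + /eqmx_rV[a3].
rewrite !row2_mul !row2Z !mul1r !mul0r ?addr0 ?add0r.
move=> /row2_inj[e1 e2] /row2_inj[e3 e4] /row2_inj[e5 e6].
have a1_neq0 : a1 != 0 by apply: contra_eq_neq e1 => ->; rewrite mul0r oner_neq0.
have a2_neq0 : a2 != 0 by apply: contra_eq_neq e4 => ->; rewrite mul0r oner_neq0.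
have /eqP := e2; rewrite eq_sym mulf_eq0 (negbTE a1_neq0) => /eqP N01.
have /eqP := e3; rewrite eq_sym mulf_eq0 (negbTE a2_neq0) => /eqP N10.
move: e5 e6; rewrite N01 N10 addr0 add0r => e5 e6.
have a3_neq0 : a3 != 0 by apply: contra_eq_neq e5 => ->; rewrite mul0r oner_neq0.
have N11 : N 1 1 = N 0 0 by apply: (mulfI a3_neq0); rewrite -e5 -e6.
exists (N 0 0); first by apply: contra_eq_neq e1 => ->; rewrite mulr0 oner_neq0.
move=> v; rewrite [v]row2_coord row2_mul row2Z N01 N10 N11 !mulr0 addr0 add0r.
by rewrite ![_ * N 0 0]mulrC.
Qed.

Definition qform2 (E : 'M[L]_2) v : L := (v *m E *m v^T) 0 0.

Lemma qform2_row2 (E : 'M[L]_2) x y :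
  qform2 E (row2 x y) = x * x * E 0 0 + x * y * (E 0 1 + E 1 0) + y * y * E 1 1.
Proof. by rewrite /qform2 row2_mul !mxE !big_ord_recr big_ord0 /= add0r !mxE /=; ring. Qed.

Lemma qform2_eq0 (E : 'M[L]_2) :
  qform2 E (row2 1 0) = 0 -> qform2 E (row2 0 1) = 0 -> qform2 E (row2 1 1) = 0 ->
  forall v, qform2 E v = 0.
Proof.
rewrite !qform2_row2 !mul1r !mul0r !add0r !addr0 => E00 E11.
rewrite E00 E11 addr0 add0r => E01 v.
by rewrite [v]row2_coord qform2_row2 E00 E11 E01 !mulr0 !addr0.
Qed.

Lemma qform_block (D : 'M[L]_(2 + 2)) v (l m : L) :
  (row_mx (l *: v) (m *: v) *m D *m (row_mx (l *: v) (m *: v))^T) 0 0 =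
  l * l * qform2 (ulsubmx D) v + l * m * qform2 (ursubmx D + (dlsubmx D)^T) v
  + m * m * qform2 (drsubmx D) v.
Proof.
rewrite -[D in LHS]submxK tr_row_mx mul_row_block mul_row_col /qform2.
by rewrite !(mxE, big_ord_recr, big_ord0) /=; ring.
Qed.

End Row2.

Section BaerSubline.
Variables (L : fieldType) (q : nat) (A : 'M[L]_2).

Lemma in_baer_rational (z : 'rV[L]_2) :
  A \in unitmx -> z != 0 -> conjm q z = z -> in_baer q A (z *m A).
Proof.
move=> A_unit z_neq0 z_rat; split; last by exists z; rewrite submx_refl.
by rewrite mulmx_free_eq0 ?row_free_unit.
Qed.

Lemma not_in_baer_scale (y t : 'rV[L]_2) (a l : L) :
  y != 0 -> ~ in_baer q A y -> in_baer q A t -> a *: y = l *: t -> a = 0.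
Proof.
move=> y_neq0 y_out [_ [s [s_neq0 s_rat /eqmxP t_eq]]] ay_eq.
have [// | a_neq0] := eqVneq a 0; exfalso.
have l_neq0 : l != 0.
  apply: contraNneq y_neq0 => l0; move: ay_eq; rewrite l0 scale0r => /eqP.
  by rewrite scalemx_eq0 (negbTE a_neq0).
apply: y_out; split => //; exists s; split => //; apply/eqmxP.
apply: eqmx_trans (eqmx_sym (eqmx_scale y a_neq0)) _; rewrite ay_eq.
exact: eqmx_trans (eqmx_scale t l_neq0) t_eq.
Qed.

Lemma b_conjugate_sym (P Q : 'rV[L]_2) : b_conjugate q A P Q -> b_conjugate q A Q P.
Proof. by case=> s [M] /= [? ? ? ? [? ?]]; exists s, M. Qed.

Lemma b_conjugate_not_in_baer (P Q : 'rV[L]_2) :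
  b_conjugate q A P Q -> ~~ (P == Q)%MS -> ~ in_baer q A P.
Proof.
case=> s [M] /= [_ _ _ f_fix [/eqmxP fP _]] PQ P_in; case/negP: PQ; apply/eqmxP.
by have /eqmxP fixP := f_fix _ P_in; apply: eqmx_trans (eqmx_sym fixP) fP.
Qed.

Lemma ext_regulus_line_eqmx (G : 'M[L]_(2, 4)) (c : 'M[L]_4) (m1 m2 : 'M[L]_(2, 4)) :
  (m1 :=: m2)%MS -> ext_regulus_line q G A c m1 -> ext_regulus_line q G A c m2.
Proof.
move=> e [rank_m on_quadric skew]; split; first by rewrite -e.
  by move=> X; rewrite -e; apply: on_quadric.
move=> t /skew[/eqmxP m1_eq | m1_skew]; [left | right].
  by apply/eqmxP; apply: eqmx_trans (eqmx_sym e) m1_eq.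
by rewrite -(cap_eqmx e (eqmx_refl (ext_line q G t))).
Qed.

End BaerSubline.

Section FieldOfOrderQ2.
Variables (L : finFieldType) (q : nat).
Hypothesis cardL : #|L| = (q ^ 2)%N.

Lemma q_ge2 : (2 <= q)%N.
Proof. by case: q cardL => [|[|//]] card; have := finNzRing_gt1 L; rewrite card. Qed.

Lemma q_gt0 : (0 < q)%N.
Proof. exact: leq_trans q_ge2. Qed.

(* q is a power of the characteristic, so x |-> x^q is additive. *)
Lemma frobD (x y : L) : (x + y) ^+ q = x ^+ q + y ^+ q.
Proof.
apply: exprDn_pchar; have [p p_prime pcharL] := finPcharP L.
have : p.-nat #|L|.
  case/and3P: (fin_ring_pchar_abelem pcharL) => pgroupL _ _.
  by move: pgroupL; rewrite /pgroup cardsT.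
rewrite cardL => /pnat_dvd p_nat; have {p_nat}: p.-nat q by apply: p_nat; rewrite dvdn_mulr.
by rewrite (eq_pnat _ (pcharf_eq pcharL)).
Qed.

(* x |-> x^q is an involution, since L has q^2 elements. *)
Lemma frobK (x : L) : (x ^+ q) ^+ q = x.
Proof. by rewrite -exprM mulnn -cardL expf_card. Qed.

Definition frob (x : L) : L := x ^+ q.

Lemma frob_zmod : zmod_morphism frob.
Proof. by move=> x y; apply: (addIr (y ^+ q)); rewrite /frob -frobD !subrK. Qed.

Lemma frob_monoid : monoid_morphism frob.
Proof. by split=> [|x y]; rewrite /frob ?expr1n ?exprMn. Qed.

HB.instance Definition _ := GRing.isZmodMorphism.Build L L frob frob_zmod.
HB.instance Definition _ := GRing.isMonoidMorphism.Build L L frob frob_monoid.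

Lemma frob0 : (0 : L) ^+ q = 0.
Proof. exact: (rmorph0 frob). Qed.

Lemma conjmD m n (M N : 'M[L]_(m, n)) : conjm q (M + N) = conjm q M + conjm q N.
Proof. exact: (map_mxD frob). Qed.

Lemma conjmZ m n a (M : 'M[L]_(m, n)) : conjm q (a *: M) = a ^+ q *: conjm q M.
Proof. exact: (map_mxZ frob). Qed.

Lemma conjmM m n p (M : 'M[L]_(m, n)) (N : 'M[L]_(n, p)) :
  conjm q (M *m N) = conjm q M *m conjm q N.
Proof. exact: (map_mxM frob). Qed.

Lemma conjm_eq0 m n (M : 'M[L]_(m, n)) : (conjm q M == 0) = (M == 0).
Proof. exact: (map_mx_eq0 frob). Qed.

Lemma conjmK m n (M : 'M[L]_(m, n)) : conjm q (conjm q M) = M.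
Proof. by apply/matrixP => i j; rewrite !mxE frobK. Qed.

Lemma conjm_row2 (x y : L) : conjm q (row2 x y) = row2 (x ^+ q) (y ^+ q).
Proof. exact: (map_row2 frob). Qed.

Lemma qform2_rational_eq0 (E : 'M[L]_2) :
  (forall s : 'rV[L]_2, s != 0 -> conjm q s = s -> qform2 E s = 0) ->
  forall v, qform2 E v = 0.
Proof.
move=> vanish; apply: qform2_eq0; apply: vanish;
  by rewrite ?conjm_row2 ?expr1n ?frob0 // row2_eq0 oner_eq0 ?eqxx ?andbF.
Qed.

(* The only automorphisms of L fixing the subfield GF(q) pointwise are the
   identity and the Frobenius map: s x is a root of the polynomial
   (X - x)(X - x^q), whose coefficients lie in GF(q). *)
Lemma rmorph_fix_subfield (s : {rmorphism L -> L}) :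
  (forall x, x ^+ q = x -> s x = x) -> (forall x, s x = x) \/ (forall x, s x = x ^+ q).
Proof.
move=> s_fix.
have s_root x : s x = x \/ s x = x ^+ q.
  have trace_fix : s (x + x ^+ q) = x + x ^+ q by apply: s_fix; rewrite frobD frobK addrC.
  have norm_fix : s (x * x ^+ q) = x * x ^+ q by apply: s_fix; rewrite exprMn frobK mulrC.
  have : (s x - x) * (s x - x ^+ q) = 0.
    have e : x * x - (x + x ^+ q) * x + x * x ^+ q = 0 by ring.
    have := congr1 s e; rewrite rmorph0 rmorphD norm_fix rmorphB !rmorphM trace_fix => <-.
    by ring.
  by move/eqP; rewrite mulf_eq0 !subr_eq0 => /orP[]/eqP; [left | right].
have [/forallP s_id | /forallPn[x0 sx0_neq]] := boolP [forall x, s x == x].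
  by left=> x; apply/eqP.
have sx0 : s x0 = x0 ^+ q by case: (s_root x0) => // sx0; rewrite sx0 eqxx in sx0_neq.
right=> x; case: (s_root x) => // sx; rewrite sx.
have [-> // | xq_neq] := eqVneq (x ^+ q) x.
case: (s_root (x + x0)); rewrite rmorphD sx sx0.
  by move/(@addrI _ x) => x0_rat; rewrite sx0 x0_rat eqxx in sx0_neq.
by rewrite frobD => /(@addIr _ (x0 ^+ q)) xq_eq; rewrite -xq_eq eqxx in xq_neq.
Qed.

(* A semilinear collineation v |-> v^s M fixing b(A) pointwise is, up to a
   scalar, v |-> (v A^-1)^s A, and s fixes GF(q) pointwise: conjugated by A
   it fixes every point of PG(1,q), in particular (1,0), (0,1) and (1,1). *)
Lemma baer_fixing_collineation (A M : 'M[L]_2) (s : {rmorphism L -> L}) :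
  A \in unitmx -> (forall v, in_baer q A v -> (map_mx s v *m M == v)%MS) ->
  (forall x, x ^+ q = x -> s x = x) /\
  exists2 n, n != 0 & forall v : 'rV[L]_2,
    map_mx s v *m M = n *: (map_mx s (v *m invmx A) *m A).
Proof.
move=> A_unit f_fix; pose N := map_mx s A *m M *m invmx A.
have fE (v : 'rV[L]_2) : map_mx s v *m M = map_mx s (v *m invmx A) *m N *m A.
  by rewrite /N -{1}(mulmxKV A_unit v) (map_mxM s (v *m invmx A)) !mulmxA mulmxKV.
have N_fix (x y : L) : x ^+ q = x -> y ^+ q = y -> (x != 0) || (y != 0) ->
    (row2 (s x) (s y) *m N == row2 x y)%MS.
  move=> x_rat y_rat xy_neq0; rewrite -map_row2.
  have z_neq0 : row2 x y != 0 by rewrite row2_eq0 negb_and.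
  have z_rat : conjm q (row2 x y) = row2 x y by rewrite conjm_row2 x_rat y_rat.
  have := f_fix _ (in_baer_rational A_unit z_neq0 z_rat).
  rewrite fE mulmxK // => /eqmxP eq_zA.
  by apply/eqmxP; apply: eqmxMfree eq_zA; rewrite row_free_unit.
have [n n_neq0 N_scalar] : exists2 n, n != 0 & forall v : 'rV[L]_2, v *m N = n *: v.
  apply: fix3_scalar.
  - by have := N_fix 1 0 (expr1n _ _) frob0; rewrite rmorph1 rmorph0 oner_neq0; apply.
  - by have := N_fix 0 1 frob0 (expr1n _ _); rewrite rmorph1 rmorph0 oner_neq0 orbT; apply.
  - by have := N_fix 1 1 (expr1n _ _) (expr1n _ _); rewrite rmorph1 oner_neq0; apply.
split; last by exists n => // v; rewrite fE N_scalar scalemxAl.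
move=> x x_rat; have := N_fix x 1 x_rat (expr1n _ _).
rewrite oner_neq0 orbT rmorph1 N_scalar row2Z => /(_ isT) /eqmx_rV[a].
rewrite row2Z mulr1 => /row2_inj[x_eq an1].
by rewrite {2}x_eq mulrA -an1 mul1r.
Qed.

(* Conjugacy with respect to b(A) is the Baer involution of b(A): since the
   collineation is not the identity, its automorphism is the Frobenius map,
   so Q is proportional to (P A^-1)^q A. *)
Lemma b_conjugate_frob (A : 'M[L]_2) (P Q : 'rV[L]_2) :
  A \in unitmx -> b_conjugate q A P Q ->
  exists k, Q = k *: (conjm q (P *m invmx A) *m A).
Proof.
move=> A_unit [s [M] /= [_ _ [v0 [_ v0_moved]] f_fix [fP _]]].
have [s_fix [n n_neq0 f_scalar]] := baer_fixing_collineation A_unit f_fix.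
have [s_id | s_frob] := rmorph_fix_subfield s_fix.
  have map_id (w : 'rV[L]_2) : map_mx s w = w by apply/matrixP => i j; rewrite mxE s_id.
  move: v0_moved; rewrite f_scalar !map_id mulmxKV //.
  by case/negP; apply/eqmxP; apply: eqmx_scale.
have [a ->] := eqmx_rV fP.
exists (a * n); rewrite f_scalar scalerA; congr (_ *: (_ *m _)).
by apply/matrixP => i j; rewrite !mxE s_frob.
Qed.

(* The monomials l^2, l^(q+1), l^(2q) are independent functions on L
   (for q = 2, l^(2q) = l^4 = l on GF(4)). *)
Lemma frob_trinomial_eq0 (a b c : L) :
  (forall l : L, l * l * a + l * l ^+ q * b + l ^+ q * l ^+ q * c = 0) ->
  [/\ a = 0, b = 0 & c = 0].
Proof.
move=> vanish; have q2 := q_ge2.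
have vanish' l : a * l ^+ 2 + b * l ^+ q.+1 + c * l ^+ (q + q) = 0.
  by rewrite -(vanish l) exprD -exprS -expr2 ![_ * l ^+ _]mulrC ![c * _]mulrC.
have [q_eq2 | q_neq2] := eqVneq q 2.
  have card4 : #|L| = 4%N by rewrite cardL q_eq2.
  apply: (@monomials3_indep L 2 3 1); rewrite ?card4 // => l.
  by rewrite -(vanish' l) q_eq2 -[(2 + 2)%N]card4 expf_card.
apply: (@monomials3_indep L 2 q.+1 (q + q)) => //; rewrite ?cardL -?mulnn;
  try by apply/eqP; lia.
all: nia.
Qed.

Section Regulus.
Variables (G : 'M[L]_(2, 4)) (A : 'M[L]_2) (c : 'M[L]_4).
Hypothesis G_rank : \rank (col_mx G (conjm q G)) = 4%N.
Hypothesis A_unit : A \in unitmx.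
Hypothesis c_quadric : defines_quadric q G A c.

Let transversals_free : row_free (col_mx G (conjm q G)).
Proof. by rewrite /row_free G_rank. Qed.

Lemma covered_spread_point (s : 'rV[L]_2) (l : L) :
  s != 0 -> conjm q s = s -> l != 0 ->
  covered_point q G A (l *: (s *m A *m G) + l ^+ q *: conjm q (s *m A *m G)).
Proof.
move=> s_neq0 s_rat l_neq0.
have X_coord : l *: (s *m A *m G) + l ^+ q *: conjm q (s *m A *m G) =
    (l *: (s *m A)) *m G + (l ^+ q *: (s *m conjm q A)) *m conjm q G.
  by rewrite !conjmM s_rat -!scalemxAl.
split.
- apply/eqP => X0.
  have [sA0 _] : l *: (s *m A) = 0 /\ l ^+ q *: (s *m conjm q A) = 0.
    by apply: (col_mx_coord_inj transversals_free); rewrite !mul0mx addr0 -X_coord.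
  move/eqP: sA0; rewrite scaler_eq0 (negbTE l_neq0) mulmx_free_eq0 ?row_free_unit //.
  exact/negP.
- by rewrite conjmD !conjmZ conjmK frobK addrC.
- exists (s *m A); split; first exact: in_baer_rational.
  by apply/sub_col_rVP; do 2 eexists.
Qed.

Let coord_mx : 'M[L]_(2 + 2, 4) := col_mx (A *m G) (conjm q A *m conjm q G).
Let gram : 'M[L]_(2 + 2) := coord_mx *m c *m coord_mx^T.

Lemma qform_coord (y z : 'rV[L]_2) :
  qform c (y *m A *m G + z *m conjm q A *m conjm q G) =
  (row_mx y z *m gram *m (row_mx y z)^T) 0 0.
Proof.
have -> : y *m A *m G + z *m conjm q A *m conjm q G = row_mx y z *m coord_mx.
  by rewrite mul_row_col !mulmxA.
by rewrite /qform trmx_mul /gram !mulmxA.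
Qed.

(* On a rational point s the three blocks of the Gram matrix give vanishing
   forms: l s A G + l^q (s A G)^q lies on the quadric for every l. *)
Lemma gram_blocks_rational (s : 'rV[L]_2) :
  s != 0 -> conjm q s = s ->
  [/\ qform2 (ulsubmx gram) s = 0, qform2 (ursubmx gram + (dlsubmx gram)^T) s = 0
    & qform2 (drsubmx gram) s = 0].
Proof.
move=> s_neq0 s_rat; apply: frob_trinomial_eq0 => l; rewrite -qform_block.
have [-> | l_neq0] := eqVneq l 0; first by rewrite frob0 !scale0r row_mx0 !mul0mx mxE.
rewrite -qform_coord -!scalemxAl -[s in s *m conjm q A]s_rat -!conjmM.
by apply/(c_quadric.2 _ _ _).2; case: (covered_spread_point s_neq0 s_rat l_neq0).
Qed.

Lemma gram_blocks_vanish (v : 'rV[L]_2) :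
  [/\ qform2 (ulsubmx gram) v = 0, qform2 (ursubmx gram + (dlsubmx gram)^T) v = 0
    & qform2 (drsubmx gram) v = 0].
Proof.
split; apply: qform2_rational_eq0 => s s_neq0 s_rat;
  by case: (gram_blocks_rational s_neq0 s_rat).
Qed.

(* The line joining u A G and (u^q A G)^q lies on the extended quadric, for
   every u: these are the lines P Q^q for conjugate points P, Q (see below). *)
Lemma quadric_contains_conjugate_lines (u : 'rV[L]_2) (a b : L) :
  qform c (a *: (u *m A *m G) + b *: (u *m conjm q A *m conjm q G)) = 0.
Proof.
rewrite !scalemxAl qform_coord qform_block.
by have [-> -> ->] := gram_blocks_vanish u; rewrite !mulr0 !addr0.
Qed.

Lemma regulus_line_off_baer (y z : 'rV[L]_2) :
  y != 0 -> z != 0 -> ~ in_baer q A y -> ~ in_baer q A (conjm q z) ->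
  (forall a b : L, qform c (a *: (y *m G) + b *: (z *m conjm q G)) = 0) ->
  ext_regulus_line q G A c (col_mx (y *m G) (z *m conjm q G)).
Proof.
move=> y_neq0 z_neq0 y_out zq_out on_quadric.
have coord0 (a b : L) : a *: (y *m G) + b *: (z *m conjm q G) = 0 -> a = 0 /\ b = 0.
  move=> e; have [/eqP ay0 /eqP bz0] : a *: y = 0 /\ b *: z = 0.
    by apply: (col_mx_coord_inj transversals_free); rewrite !mul0mx addr0 -!scalemxAl.
  move: ay0 bz0; rewrite !scalemx_eq0 (negbTE y_neq0) (negbTE z_neq0) !orbF.
  by move=> /eqP-> /eqP->.
have skew (a b a' b' : L) (t : 'rV[L]_2) : in_baer q A t ->
    a *: (y *m G) + b *: (z *m conjm q G) = a' *: (t *m G) + b' *: conjm q (t *m G) ->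
    a = 0 /\ b = 0.
  move=> t_in; rewrite conjmM !scalemxAl => /(col_mx_coord_inj transversals_free)[ay bz].
  split; first exact: not_in_baer_scale y_neq0 y_out t_in ay.
  have := congr1 (@conjm L q 1 2) bz; rewrite !conjmZ conjmK.
  move=> /(not_in_baer_scale _ zq_out t_in); rewrite conjm_eq0 => /(_ z_neq0)/eqP.
  by rewrite expf_eq0 q_gt0 => /eqP.
split.
- apply/eqP; change (row_free (col_mx (y *m G) (z *m conjm q G))).
  apply: inj_row_free => v.
  rewrite -[v]hsubmxK mul_row_col [lsubmx v]mx11_scalar [rsubmx v]mx11_scalar !mul_scalar_mx.
  by move/coord0 => [-> ->]; rewrite !raddf0 row_mx0.
- by move=> X /sub_col_rVP[a [b ->]].
- move=> t t_in; right; apply/eqP; rewrite mxrank_eq0 -submx0; apply/rV_subP => X.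
  rewrite sub_capmx => /andP[/sub_col_rVP[a [b ->]] /sub_col_rVP[a' [b' e]]].
  by have [-> ->] := skew _ _ _ _ _ t_in e; rewrite !scale0r addr0 sub0mx.
Qed.

Lemma conjugate_points_regulus_line (P Q : 'rV[L]_2) :
  P != 0 -> Q != 0 -> ~~ (P == Q)%MS -> b_conjugate q A P Q ->
  ext_regulus_line q G A c (col_mx (P *m G) (conjm q Q *m conjm q G)).
Proof.
move=> P_neq0 Q_neq0 PQ PQ_conj.
have QP : ~~ (Q == P)%MS by rewrite eqmxC.
have [k Q_eq] := b_conjugate_frob A_unit PQ_conj.
apply: regulus_line_off_baer => //.
- by rewrite conjm_eq0.
- exact: b_conjugate_not_in_baer PQ_conj PQ.
- by rewrite conjmK; apply: b_conjugate_not_in_baer (b_conjugate_sym PQ_conj) QP.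
move=> a b; set u := P *m invmx A in Q_eq; have -> : P = u *m A by rewrite mulmxKV.
rewrite Q_eq conjmZ conjmM conjmK.
by rewrite -!scalemxAl scalerA quadric_contains_conjugate_lines.
Qed.

End Regulus.

End FieldOfOrderQ2.

Unset Implicit Arguments.
Set Strict Implicit.

Theorem theorem3p2 (L : finFieldType) (q : nat) (G : 'M[L]_(2, 4))
  (A : 'M[L]_2) (c : 'M[L]_4) (P Q : 'rV[L]_2) :
  #|L| = (q ^ 2)%N ->
  \rank (col_mx G (conjm q G)) = 4%N ->
  A \in unitmx ->
  defines_quadric q G A c ->
  P != 0 -> Q != 0 -> ~~ (P == Q)%MS ->
  b_conjugate q A P Q ->
  ext_regulus_line q G A c (col_mx (P *m G) (conjm q (Q *m G))) /\
  ext_regulus_line q G A c (col_mx (conjm q (P *m G)) (Q *m G)).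
Proof.
move=> cardL G_rank A_unit c_quadric P_neq0 Q_neq0 PQ PQ_conj.
have QP : ~~ (Q == P)%MS by rewrite eqmxC.
split.
- rewrite conjmM //.
  exact: conjugate_points_regulus_line.
- apply: (ext_regulus_line_eqmx (col_mx_swap (Q *m G) _)); rewrite conjmM //.
  exact: conjugate_points_regulus_line (b_conjugate_sym PQ_conj).
Qed.
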